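(* Let $X$ be a string of length $n$, let $k\ge 2$ be an integer, and let $b$ be the number of $k$-breaks in $X$. Then $\tfrac13 b \le \mathrm{BP}_k(X)\le b+3$.
   Context: For a string $Z$, $\mathrm{per}(Z)$ is its smallest period, i.e. the smallest $q\ge1$ with $Z[i]=Z[i+q]$ for all $0\le i<|Z|-q$. $Z$ is $q$-periodic if $\mathrm{per}(Z)\le q$. $X[i..j)$ denotes the substring $X[i]X[i+1]\cdots X[j-1]$. A position $i\in\{0,1,\dots,n-3k\}$ is a $k$-break in $X$ if $i$ is a multiple of $k$ and $\mathrm{per}(X[i..i+3k))>k$. The $k$-block periodicity $\mathrm{BP}_k(X)$ is the smallest $L$ such that $X=X_1\cdots X_L$ with every $X_\ell$ $k$-periodic. *)

From mathcomp Require Import all_boot.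
Set Implicit Arguments. Unset Strict Implicit. Unset Printing Implicit Defensive.

Section Strings.
Variable T : eqType.

Definition has_period (Z : seq T) (q : nat) : bool :=
  all (fun i => onth Z i == onth Z (i + q)) (iota 0 (size Z - q)).

Lemma has_period_exists (Z : seq T) :
  exists q, (0 < q) && has_period Z q.
Proof.
exists (size Z).+1; rewrite /has_period.
by have -> : size Z - (size Z).+1 = 0 by apply/eqP; rewrite subn_eq0 leqnSn.
Qed.

Definition per (Z : seq T) : nat := ex_minn (has_period_exists Z).

Definition periodic (q : nat) (Z : seq T) : bool := per Z <= q.

Definition substr (X : seq T) (i j : nat) : seq T := take (j - i) (drop i X).

Definition is_kbreak (k : nat) (X : seq T) (i : nat) : bool :=
  [&& i + 3 * k <= size X, k %| i & k < per (substr X i (i + 3 * k))].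

Definition num_kbreaks (k : nat) (X : seq T) : nat :=
  count (is_kbreak k X) (iota 0 (size X).+1).

Definition kblock_decomp (k : nat) (X : seq T) (L : nat) : Prop :=
  exists ss : seq (seq T),
    [/\ size ss = L, flatten ss = X & all (periodic k) ss].

Definition is_BP (k : nat) (X : seq T) (L : nat) : Prop :=
  kblock_decomp k X L /\ forall L', kblock_decomp k X L' -> L <= L'.

End Strings.

(* Lower bound: a window X[i..i+3k) that is not k-periodic cannot lie inside a
   single block, so some block boundary lies strictly inside it; a boundary lies
   strictly inside at most three windows starting at multiples of k.
   Upper bound: by Fine and Wilf, two k-periodic windows overlapping in 2k
   positions have a k-periodic union, so a run of consecutive non-break windows
   forms a single block.  Cutting greedily, every block except the last three
   is charged to its own break. *)

From mathcomp Require Import all_boot zify.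
From Stdlib Require Import Classical_Prop Wf_nat.
Set Implicit Arguments. Unset Strict Implicit. Unset Printing Implicit Defensive.

Section Periods.
Variable T : eqType.
Implicit Types (Z : seq T) (p q : nat).

Lemma onth_drop Z d i : onth (drop d Z) i = onth Z (d + i).
Proof. by rewrite !onthE map_drop nth_drop. Qed.

Lemma onth_take Z m i : i < m -> onth (take m Z) i = onth Z i.
Proof. by move=> lt_im; rewrite !onthE map_take nth_take. Qed.

Lemma has_periodP Z q :
  reflect (forall i, i + q < size Z -> onth Z i = onth Z (i + q)) (has_period Z q).
Proof.
apply: (iffP allP) => [per_q i lt_iq | per_q i]; last first.
  by rewrite mem_iota => /andP[_ lt_i]; apply/eqP/per_q; lia.
by apply/eqP/per_q; rewrite mem_iota; lia.
Qed.

Lemma has_period_short Z q : size Z <= q -> has_period Z q.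
Proof. by move=> le_Zq; apply/has_periodP => i; lia. Qed.

Lemma has_period_drop Z q d : has_period Z q -> has_period (drop d Z) q.
Proof.
move/has_periodP=> per_q; apply/has_periodP => i; rewrite size_drop => lt_i.
by rewrite !onth_drop addnA per_q //; lia.
Qed.

Lemma has_period_take Z q m : has_period Z q -> has_period (take m Z) q.
Proof.
move/has_periodP=> per_q; apply/has_periodP => i; rewrite size_take_min => lt_i.
by rewrite !onth_take ?(per_q i) //; lia.
Qed.

Lemma has_period_dvd Z p q : has_period Z p -> p %| q -> has_period Z q.
Proof.
move/has_periodP=> per_p /dvdnP[m ->]; apply/has_periodP.
elim: m => [i|m IHm i lt_i]; first by rewrite addn0.
rewrite mulSn in lt_i *; rewrite addnA per_p; last by lia.
by rewrite IHm //; lia.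
Qed.

Lemma has_period_congr Z p i j : has_period Z p ->
  i < size Z -> j < size Z -> i = j %[mod p] -> onth Z i = onth Z j.
Proof.
wlog le_ij : i j / i <= j => [wlog_le per_p lt_i lt_j eq_ij | per_p _ lt_j /eqP].
  have [le_ij | /ltnW le_ji] := leqP i j; first exact: wlog_le.
  exact: esym (wlog_le j i le_ji per_p lt_j lt_i (esym eq_ij)).
rewrite eq_sym eqn_mod_dvd // => /(has_period_dvd per_p)/has_periodP per_ji.
by rewrite per_ji subnKC //; lia.
Qed.

Lemma has_period_subn Z p q : p < q -> p + q <= size Z ->
  has_period Z p -> has_period Z q -> has_period Z (q - p).
Proof.
move=> lt_pq le_pqZ /has_periodP per_p /has_periodP per_q.
apply/has_periodP => i lt_i.
have [lt_iq | le_Ziq] := ltnP (i + q) (size Z).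
  rewrite per_q // (_ : i + q = i + (q - p) + p); last by lia.
  by rewrite -per_p //; lia.
rewrite -[in LHS](subnK (_ : p <= i)); last by lia.
rewrite -per_p; last by lia.
by rewrite per_q; [congr onth|]; lia.
Qed.

(* Fine and Wilf's theorem, in its weak form |Z| >= p + q. *)
Lemma has_period_gcdn Z p q : 0 < p -> 0 < q -> p + q <= size Z ->
  has_period Z p -> has_period Z q -> has_period Z (gcdn p q).
Proof.
have [n] := ubnP (p + q); elim: n p q => // n IHn p q.
wlog le_pq : p q / p <= q => [wlog_le | lt_pq_n p_gt0 q_gt0 le_pqZ per_p per_q].
  have [le_pq | /ltnW le_qp] := leqP p q; first exact: wlog_le.
  move=> lt_pq_n p_gt0 q_gt0 le_pqZ per_p per_q.
  by rewrite gcdnC; apply: wlog_le; rewrite 1?addnC.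
have [-> | lt_pq] := eqVneq p q; first by rewrite gcdnn.
have {}lt_pq : p < q by rewrite ltn_neqAle lt_pq.
rewrite -(subnKC (ltnW lt_pq)) gcdnDl.
by apply: IHn; rewrite ?subn_gt0 ?has_period_subn //; lia.
Qed.

End Periods.

Section Periodic.
Variables (T : eqType) (k : nat).
Implicit Types (Z W : seq T).

Lemma periodicP Z :
  reflect (exists2 q, 0 < q <= k & has_period Z q) (periodic k Z).
Proof.
rewrite /periodic /per; case: ex_minnP => m /andP[m_gt0 per_m] min_m.
apply: (iffP idP) => [le_mk | [q /andP[q_gt0 le_qk] per_q]].
  by exists m; rewrite ?m_gt0.
by apply: leq_trans (min_m q _) le_qk; rewrite q_gt0.
Qed.

Lemma periodic_short Z : 0 < k -> size Z <= k -> periodic k Z.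
Proof.
move=> k_gt0 le_Zk; apply/periodicP.
by exists k; rewrite ?k_gt0 ?leqnn ?has_period_short.
Qed.

Lemma periodic_drop Z d : periodic k Z -> periodic k (drop d Z).
Proof.
by case/periodicP=> q le_qk /(has_period_drop d) per_q; apply/periodicP; exists q.
Qed.

Lemma periodic_take Z m : periodic k Z -> periodic k (take m Z).
Proof.
by case/periodicP=> q le_qk /(has_period_take m) per_q; apply/periodicP; exists q.
Qed.

(* The overlap O = W[k..3k) has both periods, hence their gcd; positions of W
   beyond 3k are then reduced modulo p' into O to check the period p. *)
Lemma periodic_merge W : 3 * k <= size W ->
  periodic k (take (3 * k) W) -> periodic k (drop k W) -> periodic k W.
Proof.
move=> le_3kW /periodicP[p /andP[p_gt0 le_pk] per_p].
move=> /periodicP[p' /andP[p'_gt0 le_p'k] per_p'].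
set O := take (2 * k) (drop k W).
have size_O : size O = 2 * k by rewrite size_takel // size_drop; lia.
have O_per_p : has_period O p.
  by rewrite /O take_drop -mulSnr has_period_drop.
have O_per_g : has_period O (gcdn p p').
  by apply: has_period_gcdn => //; [rewrite size_O; lia | apply: has_period_take].
have g_dvd_p : gcdn p p' %| p := dvdn_gcdl p p'.
have g_dvd_p' : gcdn p p' %| p' := dvdn_gcdr p p'.
apply/periodicP; exists p; rewrite ?p_gt0 //; apply/has_periodP => i lt_ipW.
have [lt_ip3k | le_3k_ip] := ltnP (i + p) (3 * k).
  have /has_periodP/(_ i) := per_p; rewrite size_takel // => /(_ lt_ip3k).
  by rewrite !onth_take //; lia.
have mod_lt x : x %% p' < p' := ltn_pmod x p'_gt0.
have onth_W x : k <= x < size W -> onth W x = onth O ((x - k) %% p').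
  move=> /andP[le_kx lt_xW].
  rewrite /O onth_take; last by have := mod_lt (x - k); lia.
  rewrite -[in LHS](subnKC le_kx) -!onth_drop.
  apply: (has_period_congr per_p'); rewrite ?modn_mod // size_drop.
  - by lia.
  - by have := mod_lt (x - k); lia.
rewrite !onth_W; [|lia..].
apply: (has_period_congr O_per_g); rewrite ?size_O.
- by have := mod_lt (i - k); lia.
- by have := mod_lt (i + p - k); lia.
rewrite !(modn_dvdm _ g_dvd_p') (_ : i + p - k = (i - k) + p); last by lia.
by rewrite -modnDmr (eqP g_dvd_p) addn0.
Qed.

End Periodic.

Lemma leq_count_sum_count (A B : Type) (a : pred A) (b : B -> pred A) s cs :
  (forall x, a x -> has (b^~ x) cs) -> count a s <= \sum_(c <- cs) count (b c) s.
Proof.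
move=> cover; elim: s => [|x s IHs] /=; first by rewrite big1.
rewrite big_split /= leq_add //; case ax: (a x) => //.
by have := cover x ax; rewrite has_count -sumn_count sumnE big_map.
Qed.

Lemma count_dvdn_window k m c s : 0 < k -> uniq s ->
  count (fun i => (k %| i) && (i < c < i + m * k)) s <= m.
Proof.
move=> k_gt0 uniq_s; rewrite -size_filter.
set w := filter _ s.
have uniq_w : uniq w by exact: filter_uniq.
have inj_div : {in w &, injective (divn^~ k)}.
  move=> i j; rewrite !mem_filter => /andP[/andP[dvd_i _] _].
  move=> /andP[/andP[dvd_j _] _] eq_ij.
  by rewrite -(divnK dvd_i) -(divnK dvd_j) eq_ij.
rewrite -(size_map (divn^~ k)) -(size_iota (c %/ k + 1 - m) m).
apply: uniq_leq_size; first by rewrite map_inj_in_uniq.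
move=> q /mapP[i]; rewrite mem_filter.
move=> /andP[/andP[/dvdnP[j ->] /andP[lt_ic lt_c]] _] ->.
rewrite mulnK // mem_iota.
have : j <= c %/ k by rewrite leq_divRL //; lia.
have : c %/ k < j + m by rewrite ltn_divLR //; lia.
lia.
Qed.

Lemma scanl_addn a l : scanl addn a l = map (addn a) (scanl addn 0 l).
Proof.
elim: l a => [|x l IHl] a //=.
rewrite add0n IHl [in RHS]IHl -map_comp; congr (_ :: _).
by apply: eq_map => y /=; rewrite addnA.
Qed.

Section Breaks.
Variables (T : eqType) (k : nat).
Hypothesis k_gt0 : 0 < k.
Implicit Types (X : seq T).

Lemma is_kbreakE X i : is_kbreak k X i =
  [&& i + 3 * k <= size X, k %| i & ~~ periodic k (take (3 * k) (drop i X))].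
Proof. by rewrite /is_kbreak /substr addKn /periodic ltnNge. Qed.

Lemma is_kbreak_drop X i : is_kbreak k (drop k X) i = is_kbreak k X (k + i).
Proof.
rewrite !is_kbreakE size_drop drop_drop (addnC i k) (dvdn_addr _ (dvdnn k)).
by congr andb; lia.
Qed.

Lemma num_kbreaks_iota X N :
  size X < N -> num_kbreaks k X = count (is_kbreak k X) (iota 0 N).
Proof.
move=> lt_XN; rewrite -(subnKC lt_XN) iotaD count_cat add0n.
rewrite (@eq_in_count _ _ pred0 (iota (size X).+1 _)) ?count_pred0 ?addn0 // => i.
by rewrite mem_iota is_kbreakE => /andP[lt_Xi _] /=; apply/negbTE; lia.
Qed.

Lemma num_kbreaks_drop X :
  num_kbreaks k X = is_kbreak k X 0 + num_kbreaks k (drop k X).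
Proof.
rewrite (@num_kbreaks_iota X (k + (size X).+1)); last by lia.
rewrite (@num_kbreaks_iota _ (size X).+1) ?size_drop; last by lia.
rewrite iotaD count_cat add0n; congr (_ + _).
  have -> : iota 0 k = 0 :: iota 1 k.-1 by rewrite -(prednK k_gt0).
  rewrite /= (@eq_in_count _ _ pred0) ?count_pred0 ?addn0 // => i.
  rewrite mem_iota is_kbreakE => /andP[i_gt0 lt_ik] /=.
  apply/negbTE; apply: contraTN lt_ik => /and3P[_ /(dvdn_leq i_gt0) le_ki _].
  by lia.
have -> : iota k (size X).+1 = map (addn k) (iota 0 (size X).+1).
  by rewrite -iotaDl addn0.
by rewrite count_map; apply: eq_count => i /=; rewrite is_kbreak_drop.
Qed.

Lemma periodic_take_cat X s t : 3 * k <= size s -> drop k X = s ++ t ->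
  periodic k (take (3 * k) X) -> periodic k s -> periodic k (take k X ++ s).
Proof.
move=> le_3k_s drop_X per_X per_s.
have size_X : size X = k + size s + size t.
  by move: (size_drop k X) (leq0n (size t)); rewrite drop_X size_cat; lia.
have X_eq : X = (take k X ++ s) ++ t by rewrite -catA -drop_X cat_take_drop.
have size_tk : size (take k X) = k by rewrite size_takel //; lia.
apply: periodic_merge; rewrite ?size_cat ?drop_size_cat //; first by lia.
by move: per_X; rewrite {1}X_eq takel_cat // size_cat; lia.
Qed.

(* The condition on the head block lets the next non-break window extend it. *)
Lemma greedy_kblock_decomp X : exists2 ss : seq (seq T),
    [/\ flatten ss = X, all (periodic k) ss & size ss <= num_kbreaks k X + 3] &
    (~~ is_kbreak k X 0 -> 3 * k <= size X -> 3 * k <= size (head [::] ss)).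
Proof.
have [n] := ubnP (size X); elim: n X => // n IHn X /ltnSE le_Xn.
have short (Y : seq T) : size Y <= k -> periodic k Y := periodic_short k_gt0.
have [lt_X3k | le_3kX] := ltnP (size X) (3 * k).
  exists [:: take k X; take k (drop k X); drop k (drop k X)]; last by lia.
  split; rewrite /= ?leq_addl // ?cats0 ?cat_take_drop //.
  by rewrite !short // ?size_take_min ?size_drop; lia.
case brk0: (is_kbreak k X 0).
  have /IHn[ss [flat_ss per_ss size_ss] _] : size (drop k X) < n.
    by rewrite size_drop; lia.
  exists (take k X :: ss) => //; split.
  - by rewrite /= flat_ss cat_take_drop.
  - by rewrite /= per_ss short // size_take_min geq_minl.
  - by rewrite (num_kbreaks_drop X) brk0 /=; lia.
have per_3k : periodic k (take (3 * k) X).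
  by move: brk0; rewrite is_kbreakE drop0 le_3kX dvdn0 => /negbFE.
have nb_X : num_kbreaks k X = num_kbreaks k (drop k X).
  by rewrite (num_kbreaks_drop X) brk0.
have [lt_X4k | le_4kX] := ltnP (size X) (4 * k).
  exists [:: take (3 * k) X; drop (3 * k) X]; last by rewrite /= size_takel.
  split; rewrite /= ?cats0 ?cat_take_drop ?per_3k //; last by lia.
  by rewrite short // size_drop; lia.
case brk1: (is_kbreak k (drop k X) 0).
  have /IHn[ss [flat_ss per_ss size_ss] _] : size (drop (3 * k) X) < n.
    by rewrite size_drop; lia.
  exists (take (3 * k) X :: ss); last by rewrite size_takel.
  split; rewrite /= ?flat_ss ?cat_take_drop ?per_3k //.
  rewrite nb_X (num_kbreaks_drop (drop k X)) brk1.
  rewrite (num_kbreaks_drop (drop k (drop k X))) !drop_drop.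
  by rewrite (_ : k + (k + k) = 3 * k); lia.
have le_3k_Xk : 3 * k <= size (drop k X) by rewrite size_drop; lia.
have /IHn[[|s1 ss] [flat_ss per_ss size_ss]] : size (drop k X) < n.
  by rewrite size_drop; lia.
  by rewrite brk1 => /(_ isT le_3k_Xk) /= ?; lia.
rewrite brk1 => /(_ isT le_3k_Xk) /= long_s1.
move: flat_ss per_ss => /= flat_ss /andP[per_s1 per_ss].
exists ((take k X ++ s1) :: ss); last by rewrite size_cat; lia.
split; last by rewrite nb_X.
  by rewrite /= -catA flat_ss cat_take_drop.
by rewrite /= per_ss andbT (periodic_take_cat long_s1 (esym flat_ss)).
Qed.

(* scanl addn 0 (map size ss) lists the end positions of the blocks of ss. *)
Lemma periodic_uncut_window (ss : seq (seq T)) i m :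
  all (periodic k) ss -> i + m <= size (flatten ss) ->
  ~~ has (fun c => i < c < i + m) (scanl addn 0 (map size ss)) ->
  periodic k (take m (drop i (flatten ss))).
Proof.
elim: ss i => [|s ss IHss] i /=; first by move=> *; exact: periodic_short.
move=> /andP[per_s per_ss]; rewrite size_cat add0n scanl_addn has_map negb_or.
move=> le_im /andP[no_cut_s no_cut_ss].
have [le_ims | lt_s_im] := leqP (i + m) (size s).
  rewrite take_drop takel_cat -?take_drop; last by lia.
  exact/periodic_take/periodic_drop.
have [le_si | lt_is] := leqP (size s) i; last by rewrite lt_is lt_s_im in no_cut_s.
rewrite drop_cat ltnNge le_si /=; apply: IHss => //; first by lia.
by apply: contra no_cut_ss; apply: sub_has => c /=; lia.
Qed.

Lemma num_kbreaks_flatten_leq (ss : seq (seq T)) :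
  all (periodic k) ss -> num_kbreaks k (flatten ss) <= 3 * size ss.
Proof.
move=> per_ss; set cuts := scanl addn 0 (map size ss).
pose cut_in c i := (k %| i) && (i < c < i + 3 * k).
have cover i : is_kbreak k (flatten ss) i -> has (cut_in^~ i) cuts.
  rewrite is_kbreakE /cut_in => /and3P[le_iX dvd_i]; apply: contraNT.
  by rewrite dvd_i => no_cut; apply: periodic_uncut_window.
apply: leq_trans (leq_count_sum_count _ cover) _.
apply: (@leq_trans (\sum_(c <- cuts) 3)).
  by apply: leq_sum => c _; apply: count_dvdn_window; rewrite ?iota_uniq.
by rewrite big_const_seq count_predT iter_addn_0 size_scanl size_map mulnC.
Qed.

End Breaks.

Theorem lemma3p3 (T : eqType) (X : seq T) (k : nat) (hk : 2 <= k) :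
  exists L, is_BP k X L /\
    num_kbreaks k X <= 3 * L /\ L <= num_kbreaks k X + 3.
Proof.
have k_gt0 : 0 < k by apply: ltnW.
have [ss [flat_ss per_ss size_ss] _] := greedy_kblock_decomp k_gt0 X.
have dec_ss : kblock_decomp k X (size ss) by exists ss.
have [L [[dec_L min_L] _]] := dec_inh_nat_subset_has_unique_least_element
  _ (fun L => classic (kblock_decomp k X L)) (ex_intro _ _ dec_ss).
exists L; split; first by split=> // L' /min_L/leP.
split; last by apply: leq_trans size_ss; apply/leP/min_L.
by case: dec_L => ss' [<- <- per_ss']; apply: num_kbreaks_flatten_leq.
Qed.
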